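(* Let $C$ be a program. Then: (1) (mut) $\mathsf{ert}[\![\langle e\rangle:=e']\!]([e\mapsto e'])\preceq[e\mapsto -]$; (2) (lkp) $\mathsf{ert}[\![x:=\langle e\rangle]\!]\big([x=z\wedge\mathsf{emp}]\oplus[e[x/y]\mapsto z]\big)\preceq[x=y\wedge\mathsf{emp}]\oplus[e\mapsto z]$; (3) (alc) if $x$ does not occur in $e$, then $\mathsf{ert}[\![x:=\mathtt{alloc}(e)]\!]\big(\bigoplus_{i=1}^{e}[x+i-1\mapsto 0]\big)\preceq[\mathsf{emp}]$; (4) (aux) for all $f,g\in\mathbb{T}$ and every variable $y$ not occurring in $C$: $\mathsf{ert}[\![C]\!](f)\preceq g$ implies $\mathsf{ert}[\![C]\!](\inf y\colon f)\preceq\inf y\colon g$.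
   Context: States and programs. Fix a finite set $\mathrm{Vars}$ of variables; values are $\mathbb{N}$, locations are $\mathbb{N}_{>0}$. A stack is $s\colon \mathrm{Vars}\to\mathbb{N}$; a heap is a partial map $h$ from a finite set $\mathrm{dom}(h)\subseteq\mathbb{N}_{>0}$ to $\mathbb{N}$. $h_1\perp h_2$ means disjoint domains; then $h_1\star h_2$ is their union; $h_\emptyset$ is the empty heap. $\mathsf{States}$ is the set of pairs $(s,h)$. $s(e)$ is the value of a (heap-independent) arithmetic expression $e$ under $s$, $s\models\varphi$ means the Boolean expression $\varphi$ holds under $s$, $s[x\mapsto v]$ is the updated stack; $e[x/y]$ is syntactic substitution of variable $y$ for $x$ in $e$. Programs are generated by $C ::= \mathtt{tick}(e) \mid x:=e \mid x:=\mathtt{alloc}(e) \mid \langle e\rangle:=e' \mid x:=\langle e\rangle \mid \mathtt{free}(e) \mid \{C\}[p]\{C\} \mid \mathtt{if}(\varphi)\{C\}\mathtt{else}\{C\} \mid C;C \mid \mathtt{while}(\varphi)\{C\}$, where $p$ is an expression with $s(p)\in[0,1]\cap\mathbb{Q}$ for all $s$. Runtimes. $\mathbb{T}$ is the set of functions $\mathsf{States}\to[0,\infty]$, ordered pointwise by $\preceq$; arithmetic is pointwise with $0\cdot\infty=0$. $[\varphi]$ is the $0/1$-valued Iverson bracket. Truncated subtraction: $a\dot- b=\max(a-b,0)$, $\infty\dot- b=\infty$ for finite $b$, $a\dot-\infty=0$. $(f\oplus g)(s,h)=\min\{f(s,h_1)+g(s,h_2)\mid h=h_1\star h_2\}$;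 $(f \mathbin{-\!\!\ominus} g)(s,h)=\sup\{g(s,h\star h')\dot- f(s,h')\mid h'\perp h\}$; $(\inf y\colon f)(s,h)=\inf_{v\in\mathbb{N}} f(s[y\mapsto v],h)$, $(\sup y\colon f)(s,h)=\sup_{v\in\mathbb{N}}f(s[y\mapsto v],h)$; $f[x/e](s,h)=f(s[x\mapsto s(e)],h)$. Atomic ($0/\infty$-valued) runtimes: $[\mathsf{emp}](s,h)=0$ if $h=h_\emptyset$, else $\infty$; $[\varphi\wedge\mathsf{emp}](s,h)=0$ if $s\models\varphi$ and $h=h_\emptyset$, else $\infty$; $\mathsf{tm}(e)(s,h)=s(e)$ if $h=h_\emptyset$, else $\infty$; $[e\mapsto e'](s,h)=0$ if $\mathrm{dom}(h)=\{s(e)\}$ and $h(s(e))=s(e')$, else $\infty$; $[e\mapsto -](s,h)=0$ if $\mathrm{dom}(h)=\{s(e)\}$, else $\infty$; $\bigoplus_{i=1}^{e} f_i$ is evaluated at $(s,h)$ as the separating sum over $i=1,\dots,s(e)$ (empty one: $[\mathsf{emp}]$). Expected runtime transformer $\mathsf{ert}[\![C]\!]\colon\mathbb{T}\to\mathbb{T}$ (with $v$ fresh): $\mathsf{ert}[\![\mathtt{tick}(e)]\!](f)=\mathsf{tm}(e)\oplus f$; $\mathsf{ert}[\![x:=e]\!](f)=f[x/e]$; $\mathsf{ert}[\![x:=\mathtt{alloc}(e)]\!](f)=\sup v\colon (\bigoplus_{i=1}^{e}[v+i-1\mapsto 0])\mathbin{-\!\!\ominus} f[x/v]$; $\mathsf{ert}[\![\langle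 e\rangle:=e']\!](f)=[e\mapsto-]\oplus([e\mapsto e']\mathbin{-\!\!\ominus} f)$; $\mathsf{ert}[\![x:=\langle e\rangle]\!](f)=\inf v\colon [e\mapsto v]\oplus([e\mapsto v]\mathbin{-\!\!\ominus} f[x/v])$; $\mathsf{ert}[\![\mathtt{free}(e)]\!](f)=[e\mapsto-]\oplus f$; $\mathsf{ert}[\![C_1;C_2]\!](f)=\mathsf{ert}[\![C_1]\!](\mathsf{ert}[\![C_2]\!](f))$; conditional: $[\varphi]\cdot\mathsf{ert}[\![C_1]\!](f)+[\neg\varphi]\cdot\mathsf{ert}[\![C_2]\!](f)$; probabilistic choice: $p\cdot\mathsf{ert}[\![C_1]\!](f)+(1-p)\cdot\mathsf{ert}[\![C_2]\!](f)$; $\mathsf{ert}[\![\mathtt{while}(\varphi)\{C\}]\!](f)=\mathrm{lfp}\, g.\ [\neg\varphi]\cdot f+[\varphi]\cdot\mathsf{ert}[\![C]\!](g)$ (least fixed point in $(\mathbb{T},\preceq)$). *)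

(* Runtimes take values in \bar R
   (extended reals over an arbitrary realType R), restricted to [0, +oo]. *)
From HB Require Import structures.
From mathcomp Require Import all_boot all_order all_algebra.
From mathcomp Require Import finmap.
From mathcomp Require Import all_classical all_reals.
From mathcomp Require Import ereal.

Set Implicit Arguments.
Unset Strict Implicit.
Unset Printing Implicit Defensive.
Import Order.TTheory GRing.Theory Num.Theory.

Local Open Scope ring_scope.
Local Open Scope ereal_scope.

Section HeapLang.
Context {R : realType} {V : finType}.

Definition stack := V -> nat.

(* a heap: finite partial map from locations (positive naturals) to values *)
Record heap := Heap { hmap :> {fmap nat -> nat} ; hvalid : 0%N \notin domf hmap }.

Definition state := (stack * heap)%type.

(* runtimes: the elements of T are the runtimes with values in [0, +oo] *)
Definition runtime := state -> \bar R.
Definition is_runtime (f : runtime) : Prop := forall st, 0 <= f st.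

Definition rle (f g : runtime) : Prop := forall st, f st <= g st.

Definition upd (s : stack) (x : V) (v : nat) : stack :=
  fun y => if y == x then v else s y.

(* (heap-independent) expressions, given by their semantics *)
Definition aexp := stack -> nat.
Definition bexp := stack -> bool.
Record pexp := PExp {
  pval : stack -> rat ;
  pval_ge0 : forall s, (0 <= pval s)%R ;
  pval_le1 : forall s, (pval s <= 1)%R }.

(* "y does not occur in e" for expressions: e does not depend on y *)
Definition indep {T : Type} (y : V) (e : stack -> T) : Prop :=
  forall s v, e (upd s y v) = e s.

Definition subst (e : aexp) (x y : V) : aexp := fun s => e (upd s x (s y)).

Definition hsplit (h h1 h2 : heap) : Prop :=
  [disjoint domf (hmap h1) & domf (hmap h2)]%fset /\
  hmap h = catf (hmap h1) (hmap h2).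

Definition tsub (a b : \bar R) : \bar R :=
  if b == +oo then 0 else maxe (a - b) 0.

Definition oplus (f g : runtime) : runtime := fun st =>
  ereal_inf [set r | exists h1 h2 : heap,
     hsplit st.2 h1 h2 /\ r = f (st.1, h1) + g (st.1, h2)].

Definition wand (f g : runtime) : runtime := fun st =>
  ereal_sup [set r | exists h' hu : heap,
     hsplit hu st.2 h' /\ r = tsub (g (st.1, hu)) (f (st.1, h'))].

Definition inf_var (y : V) (f : runtime) : runtime := fun st =>
  ereal_inf (range (fun v : nat => f (upd st.1 y v, st.2))).
Definition sup_var (y : V) (f : runtime) : runtime := fun st =>
  ereal_sup (range (fun v : nat => f (upd st.1 y v, st.2))).

Definition emp : runtime := fun st =>
  if domf (hmap st.2) == fset0 then 0 else +oo.
Definition emp_and (phi : bexp) : runtime := fun st =>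
  if phi st.1 && (domf (hmap st.2) == fset0) then 0 else +oo.
Definition tm (e : aexp) : runtime := fun st =>
  if domf (hmap st.2) == fset0 then ((e st.1)%:R)%:E else +oo.
Definition pt (e e' : aexp) : runtime := fun st =>
  if (domf (hmap st.2) == [fset e st.1]%fset) &&
     (fnd (hmap st.2) (e st.1) == Some (e' st.1)) then 0 else +oo.
Definition ptany (e : aexp) : runtime := fun st =>
  if domf (hmap st.2) == [fset e st.1]%fset then 0 else +oo.

Fixpoint itsep (k : nat) (F : nat -> runtime) : runtime :=
  match k with
  | 0 => emp
  | k'.+1 => oplus (itsep k' F) (F k'.+1)
  end.
Definition bigsep (e : aexp) (F : nat -> runtime) : runtime := fun st =>
  itsep (e st.1) F st.

Definition iv (b : bool) : \bar R := if b then 1 else 0.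

(* least fixed point in (T, ⪯) of a monotone map: the pointwise infimum of
   all pre-fixed points in T (Knaster--Tarski) *)
Definition lfp (Phi : runtime -> runtime) : runtime := fun st =>
  ereal_inf [set g st | g in [set g : runtime | is_runtime g /\ rle (Phi g) g]].

End HeapLang.

Arguments heap : clear implicits.
Arguments state : clear implicits.
Arguments runtime : clear implicits.
Arguments stack : clear implicits.
Arguments aexp : clear implicits.
Arguments bexp : clear implicits.
Arguments pexp : clear implicits.

Section Programs.
Context {V : finType}.

Inductive prog :=
| Tick of aexp V
| Assign of V & aexp V
| Alloc of V & aexp V
| Mut of aexp V & aexp V
| Lookup of V & aexp V
| Free of aexp V
| PChoice of prog & pexp V & prog
| Ite of bexp V & prog & prog
| Seq of prog & prog
| While of bexp V & prog.

Fixpoint notin_prog (y : V) (C : prog) : Prop :=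
  match C with
  | Tick e => indep y e
  | Assign x e => x <> y /\ indep y e
  | Alloc x e => x <> y /\ indep y e
  | Mut e e' => indep y e /\ indep y e'
  | Lookup x e => x <> y /\ indep y e
  | Free e => indep y e
  | PChoice C1 p C2 => notin_prog y C1 /\ indep y (pval p) /\ notin_prog y C2
  | Ite b C1 C2 => indep y b /\ notin_prog y C1 /\ notin_prog y C2
  | Seq C1 C2 => notin_prog y C1 /\ notin_prog y C2
  | While b C1 => indep y b /\ notin_prog y C1
  end.

End Programs.

Arguments prog : clear implicits.

Section ERT.
Context {R : realType} {V : finType}.

Fixpoint ert (C : prog V) (f : runtime R V) : runtime R V :=
  match C with
  | Tick e => oplus (tm e) f
  | Assign x e => fun st => f (upd st.1 x (e st.1), st.2)
  | Alloc x e => fun st =>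
      ereal_sup (range (fun v : nat =>
        wand (bigsep e (fun i => pt (fun _ => (v + i - 1)%N) (fun _ => 0%N)))
             (fun st' => f (upd st'.1 x v, st'.2)) st))
  | Mut e e' => oplus (ptany e) (wand (pt e e') f)
  | Lookup x e => fun st =>
      ereal_inf (range (fun v : nat =>
        oplus (pt e (fun _ => v))
              (wand (pt e (fun _ => v)) (fun st' => f (upd st'.1 x v, st'.2))) st))
  | Free e => oplus (ptany e) f
  | PChoice C1 p C2 => fun st =>
      (ratr (pval p st.1))%:E * ert C1 f st
      + (1 - ratr (pval p st.1))%:E * ert C2 f st
  | Ite b C1 C2 => fun st =>
      iv (b st.1) * ert C1 f st + iv (~~ b st.1) * ert C2 f st
  | Seq C1 C2 => ert C1 (ert C2 f)
  | While b C1 =>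
      lfp (fun g st => iv (~~ b st.1) * f st + iv (b st.1) * ert C1 g st)
  end.

End ERT.

From HB Require Import structures.
From mathcomp Require Import all_boot all_order all_algebra.
From mathcomp Require Import finmap.
From mathcomp Require Import all_classical all_reals.
From mathcomp Require Import ereal.

Set Implicit Arguments.
Unset Strict Implicit.
Unset Printing Implicit Defensive.
Import Order.TTheory GRing.Theory Num.Theory.
Local Open Scope ring_scope.
Local Open Scope ereal_scope.

(* For (1)-(3) evaluate at a heap of the right shape and split off the empty
   heap in the separating sum: the magic wand at the empty heap is 0 as soon as
   its second argument lies below its first, because every truncated difference
   then vanishes.
   For (4), if y does not occur in C then ert C (f[y/v]) <= (ert C f)[y/v], by
   induction on C; for a loop, every pre-fixed point g of its functional yields
   the pre-fixed point g[y/v] of the functional for f[y/v].  Since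
   inf y: f <= f[y/v] and ert C is monotone, ert C (inf y: f) <= g[y/v] for
   every v. *)

Section Stacks.
Variables (V : finType) (s : stack V).

Lemma upd_eq x v : upd s x v x = v.
Proof. by rewrite /upd eqxx. Qed.

Lemma upd_neq x y v : y != x -> upd s x v y = s y.
Proof. by rewrite /upd => /negPf ->. Qed.

Lemma upd_upd x a b : upd (upd s x a) x b = upd s x b.
Proof. by apply/funext => z; rewrite /upd; case: eqP. Qed.

Lemma upd_id x : upd s x (s x) = s.
Proof. by apply/funext => z; rewrite /upd; case: eqP => [->|]. Qed.

Lemma updC x y a b : x <> y -> upd (upd s x a) y b = upd (upd s y b) x a.
Proof.
move=> xy; apply/funext => z; rewrite /upd.
by case: eqP => [->|//]; case: eqP => // yx; case: xy.
Qed.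

End Stacks.

Lemma hmap_inj : injective hmap.
Proof.
by case=> m1 p1 [m2 p2] /= E; subst m2; congr Heap; apply: bool_irrelevance.
Qed.

Lemma hemp_valid : 0%N \notin domf ([fmap]%fmap : {fmap nat -> nat}).
Proof. by rewrite domf0. Qed.

Definition hemp : heap := Heap hemp_valid.

Lemma hsplit_h0 h : hsplit h h hemp.
Proof. by split; [exact: fdisjointX0 | rewrite /= catf0]. Qed.

Lemma hsplit_0h h : hsplit h hemp h.
Proof. by split; [exact: fdisjoint0X | rewrite /= cat0f]. Qed.

Lemma hsplit0l hu h : hsplit hu hemp h -> hu = h.
Proof. by case=> _ E; apply: hmap_inj; rewrite E /= cat0f. Qed.

Lemma domf_eq0_hemp h : domf (hmap h) = fset0 -> h = hemp.
Proof. by move/fmap_nil => h0; apply: hmap_inj. Qed.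

Section Runtimes.
Variables (R : realType) (V : finType).
Implicit Types (f g : runtime R V) (s : stack V) (h : heap).

Definition upd_rt (y : V) (v : nat) f : runtime R V :=
  fun st => f (upd st.1 y v, st.2).

Definition cells (a : aexp V) (i : nat) : runtime R V :=
  pt (fun s => (a s + i - 1)%N) (fun=> 0%N).

Lemma rle_trans g f1 f2 : rle f1 g -> rle g f2 -> rle f1 f2.
Proof. by move=> fg gf st; exact: le_trans (fg st) (gf st). Qed.

Lemma tsub_le0 (a b : \bar R) : a <= b -> tsub a b <= 0.
Proof.
by move=> ab; rewrite /tsub; case: ifP => // _; rewrite ge_max lexx andbT sube_le0.
Qed.

Lemma le_tsub (a b c : \bar R) : a <= b -> tsub a c <= tsub b c.
Proof.
move=> ab; rewrite /tsub; case: ifP => // _.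
by rewrite ge_max !le_max lexx orbT andbT leeD.
Qed.

Lemma oplus_le_split f g s h h1 h2 :
  hsplit h h1 h2 -> oplus f g (s, h) <= f (s, h1) + g (s, h2).
Proof. by move=> hs; apply: ereal_inf_lbound; exists h1, h2. Qed.

Lemma le_oplusr f g1 g2 : rle g1 g2 -> rle (oplus f g1) (oplus f g2).
Proof.
move=> g12 [s h]; apply/ereal_infP => _ [h1 [h2 [hs ->]]].
exact: le_trans (oplus_le_split _ _ _ hs) (leeD (lexx _) (g12 _)).
Qed.

Lemma le_wandr f g1 g2 : rle g1 g2 -> rle (wand f g1) (wand f g2).
Proof.
move=> g12 [s h]; apply/ereal_supP => _ [h' [hu [hs ->]]].
apply: le_ereal_sup_tmp; exists (tsub (g2 (s, hu)) (f (s, h'))).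
  by exists h', hu.
exact: le_tsub.
Qed.

Lemma wand_hemp_le0 f g s :
  (forall h, g (s, h) <= f (s, h)) -> wand f g (s, hemp) <= 0.
Proof.
move=> gf; apply/ereal_supP => _ [h' [hu [/hsplit0l -> ->]]].
exact: tsub_le0.
Qed.

Lemma upd_rt_oplus y v f g :
  upd_rt y v (oplus f g) = oplus (upd_rt y v f) (upd_rt y v g).
Proof. by []. Qed.

Lemma upd_rt_wand y v f g :
  upd_rt y v (wand f g) = wand (upd_rt y v f) (upd_rt y v g).
Proof. by []. Qed.

Lemma oplus_upd y v f g s h :
  oplus f g (upd s y v, h) = oplus (upd_rt y v f) (upd_rt y v g) (s, h).
Proof. by []. Qed.

Lemma wand_upd y v f g s h :
  wand f g (upd s y v, h) = wand (upd_rt y v f) (upd_rt y v g) (s, h).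
Proof. by []. Qed.

Lemma upd_rt_tm y v e : indep y e -> upd_rt y v (tm e) = tm e.
Proof. by move=> ye; apply/funext => -[s h]; rewrite /upd_rt /tm /= ye. Qed.

Lemma upd_rt_ptany y v e : indep y e -> upd_rt y v (ptany e) = ptany e.
Proof. by move=> ye; apply/funext => -[s h]; rewrite /upd_rt /ptany /= ye. Qed.

Lemma upd_rt_pt y v e e' : indep y e -> indep y e' ->
  upd_rt y v (pt e e') = pt e e'.
Proof. by move=> ye ye'; apply/funext => -[s h]; rewrite /upd_rt /pt /= ye ye'. Qed.

Lemma upd_rt_itsep y v k (F : nat -> runtime R V) :
  upd_rt y v (itsep k F) = itsep k (fun i => upd_rt y v (F i)).
Proof. by elim: k => [//|k IHk] /=; rewrite upd_rt_oplus IHk. Qed.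

Lemma upd_rt_bigsep y v e (F : nat -> runtime R V) : indep y e ->
  upd_rt y v (bigsep e F) = bigsep e (fun i => upd_rt y v (F i)).
Proof.
move=> ye; apply/funext => -[s h].
by rewrite {2}/bigsep /= -upd_rt_itsep /upd_rt /bigsep /= ye.
Qed.

Lemma upd_rt_cells x v i : upd_rt x v (cells (fun s => s x) i) = cells (fun=> v) i.
Proof. by apply/funext => -[s h]; rewrite /upd_rt /cells /pt /= upd_eq. Qed.

Lemma inf_var_le y v f : rle (inf_var y f) (upd_rt y v f).
Proof. by move=> st; apply: ereal_inf_lbound; exists v. Qed.

Lemma lfp_le_comp (Phi Psi : runtime R V -> runtime R V) (sigma : state V -> state V) :
  (forall g, is_runtime g -> rle (Phi g) g -> rle (Psi (g \o sigma)) (g \o sigma)) ->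
  rle (lfp Psi) (lfp Phi \o sigma).
Proof.
move=> pre st; apply: ereal_inf_le_tmp => _ [g [g_ge0 Phi_g] <-].
by exists (g \o sigma) => //; split; [move=> ?; exact: g_ge0 | exact: pre].
Qed.

Lemma le_lincomb (a b x1 x2 y1 y2 : \bar R) : 0 <= a -> 0 <= b ->
  x1 <= x2 -> y1 <= y2 -> a * x1 + b * y1 <= a * x2 + b * y2.
Proof. by move=> a0 b0 x12 y12; rewrite leeD // lee_wpmul2l. Qed.

Lemma iv_ge0 c : (0 : \bar R) <= iv c.
Proof. by case: c. Qed.

Lemma ratr_pval_ge0 (p : pexp V) s : (0 : \bar R) <= (ratr (pval p s))%:E.
Proof. by rewrite lee_fin ler0q pval_ge0. Qed.

Lemma ratr_pval_compl_ge0 (p : pexp V) s : (0 : \bar R) <= (1 - ratr (pval p s))%:E.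
Proof. by rewrite lee_fin subr_ge0 -(rmorph1 (ratr : rat -> R)) ler_rat pval_le1. Qed.

Lemma le_ert (C : prog V) : {homo @ert R V C : f g / rle f g}.
Proof.
elim: C => [e|x e|x e|e e'|x e|e|C1 IH1 p C2 IH2|b C1 IH1 C2 IH2|C1 IH1 C2 IH2|
  b C1 IH1] f g fg /=.
- exact: le_oplusr.
- by move=> st; apply: fg.
- move=> st; apply/ereal_supP => _ [v _ <-].
  apply: le_ereal_sup_tmp; exists (wand (bigsep e (cells (fun=> v))) (upd_rt x v g) st).
    by exists v.
  by apply: le_wandr => st'; apply: fg.
- exact/le_oplusr/le_wandr.
- move=> st; apply/ereal_infP => _ [v _ <-].
  apply: ge_ereal_inf.
  exists (oplus (pt e (fun=> v)) (wand (pt e (fun=> v)) (upd_rt x v f)) st).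
    by exists v.
  by apply/le_oplusr/le_wandr => st'; apply: fg.
- exact: le_oplusr.
- move=> st; apply: le_lincomb; rewrite ?IH1 ?IH2 //.
  + exact: ratr_pval_ge0.
  + exact: ratr_pval_compl_ge0.
- by move=> st; apply: le_lincomb; rewrite ?iv_ge0 ?IH1 ?IH2.
- exact/IH1/IH2.
- apply: (@lfp_le_comp _ _ id) => g' _ pre st; apply: le_trans (pre st).
  by apply: le_lincomb; rewrite ?iv_ge0 ?fg.
Qed.

Lemma ert_upd_rt_le (C : prog V) y v f : notin_prog y C ->
  rle (ert C (upd_rt y v f)) (upd_rt y v (ert C f)).
Proof.
elim: C f => [e|x e|x e|e e'|x e|e|C1 IH1 p C2 IH2|b C1 IH1 C2 IH2|C1 IH1 C2 IH2|
  b C1 IH1] f /=.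
- by move=> ye; rewrite upd_rt_oplus upd_rt_tm.
- by move=> [xy ye] [s h]; rewrite /upd_rt /= ye updC.
- move=> [xy ye] [s h]; rewrite {2}/upd_rt /=.
  apply: ereal_sup_le => _ [w _ <-]; exists w => //.
  rewrite wand_upd upd_rt_bigsep //.
  congr (wand _ _ _).
  by apply/funext => -[s' h']; rewrite /upd_rt /= (updC _ _ _ xy).
- by move=> [ye ye']; rewrite upd_rt_oplus upd_rt_ptany // upd_rt_wand upd_rt_pt.
- move=> [xy ye] [s h]; rewrite {2}/upd_rt /=.
  apply: ereal_inf_le_tmp => _ [w _ <-]; exists w => //.
  rewrite oplus_upd upd_rt_wand upd_rt_pt //.
  congr (oplus _ (wand _ _) _).
  by apply/funext => -[s' h']; rewrite /upd_rt /= (updC _ _ _ xy).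
- by move=> ye; rewrite upd_rt_oplus upd_rt_ptany.
- move=> [n1 [yp n2]] [s h]; rewrite /upd_rt /= yp.
  apply: le_lincomb; rewrite ?(IH1 _ n1) ?(IH2 _ n2) //.
  + exact: ratr_pval_ge0.
  + exact: ratr_pval_compl_ge0.
- move=> [yb [n1 n2]] [s h]; rewrite /upd_rt /= yb.
  by apply: le_lincomb; rewrite ?iv_ge0 ?(IH1 _ n1) ?(IH2 _ n2).
- move=> [n1 n2]; exact: rle_trans (le_ert C1 (IH2 _ n2)) (IH1 _ n1).
- move=> [yb n1]; apply: (@lfp_le_comp _ _ (fun st => (upd st.1 y v, st.2))).
  move=> g _ pre [s h]; apply: le_trans (pre (upd s y v, h)); rewrite /= yb.
  by apply: le_lincomb; rewrite ?iv_ge0 ?lexx ?(IH1 _ n1).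
Qed.

Lemma ert_inf_var_le (C : prog V) f g y : notin_prog y C ->
  rle (ert C f) g -> rle (ert C (inf_var y f)) (inf_var y g).
Proof.
move=> yC fg [s h]; apply/ereal_infP => _ [v _ <-].
apply: le_trans (le_ert C (inf_var_le y v f) _) _.
exact: le_trans (ert_upd_rt_le v f yC _) (fg _).
Qed.

Lemma ert_mut_pt (e e' : aexp V) :
  rle (ert (Mut e e') (pt e e' : runtime R V)) (ptany e).
Proof.
move=> [s h] /=; rewrite {2}/ptany /=; case: ifP => [he | _]; last by rewrite leey.
apply: le_trans (oplus_le_split _ _ _ (hsplit_h0 h)) _.
by rewrite /ptany /= he add0e; apply: wand_hemp_le0 => h'; rewrite lexx.
Qed.

Lemma ert_alloc_cells x (e : aexp V) : indep x e ->
  rle (ert (Alloc x e) (bigsep e (cells (fun s => s x)))) emp.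
Proof.
move=> xe [s h]; rewrite [X in _ <= X]/emp /=.
case: ifP => [/eqP/domf_eq0_hemp -> | _]; last by rewrite leey.
apply/ereal_supP => _ [v _ <-]; apply: wand_hemp_le0 => h'.
rewrite -[X in X <= _]/(upd_rt x v (bigsep e _) (s, h')) upd_rt_bigsep //.
by under eq_fun => i do rewrite upd_rt_cells.
Qed.

Lemma ert_lookup_pt x y z (e : aexp V) : x <> y ->
  rle (ert (Lookup x e)
         (oplus (emp_and (fun s => s x == s z))
                (pt (subst e x y) (fun s => s z)) : runtime R V))
      (oplus (emp_and (fun s => s x == s y)) (pt e (fun s => s z))).
Proof.
move=> xy [s h]; apply/ereal_infP => _ [h1 [h2 [/= hs ->]]].
rewrite [emp_and _ _]/emp_and [pt e _ _]/pt /=.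
case: ifP => [/andP [/eqP sxy /eqP h1_0] | _]; last by case: ifP; rewrite leey.
case: ifP => [/andP [/eqP h2_dom /eqP h2_val] | _]; last by rewrite leey.
move: hs; rewrite (domf_eq0_hemp h1_0) => /hsplit0l hh2; subst h2.
apply: ge_ereal_inf; eexists; first by exists (s z).
apply: le_trans (oplus_le_split _ _ _ (hsplit_h0 h)) _.
rewrite {1}/pt /= h2_val h2_dom !eqxx add0e adde0.
apply: wand_hemp_le0 => h'; rewrite [X in _ <= X]/pt /=.
case: ifP => [/andP [/eqP h'_dom /eqP h'_val] | _]; last by rewrite leey.
apply: le_trans (oplus_le_split _ _ _ (hsplit_0h h')) _.
have upd_z : upd s x (s z) z = s z by rewrite /upd; case: eqP => [->|].
have subst_e : subst e x y (upd s x (s z)) = e s.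
  have yx : y != x by apply/eqP => yx; case: xy.
  by rewrite /subst upd_upd upd_neq // -sxy upd_id.
by rewrite /emp_and /pt /= subst_e upd_z h'_val h'_dom upd_eq !eqxx adde0.
Qed.

End Runtimes.

Theorem mainTheorem10 (R : realType) (V : finType) :
  (* (1) mut *)
  (forall e e' : aexp V,
     rle (ert (Mut e e') (pt e e' : runtime R V)) (ptany e)) /\
  (* (2) lkp *)
  (forall (x y z : V) (e : aexp V), x <> y ->
     rle (ert (Lookup x e)
            (oplus (emp_and (fun s => s x == s z))
                   (pt (subst e x y) (fun s => s z)) : runtime R V))
         (oplus (emp_and (fun s => s x == s y)) (pt e (fun s => s z)))) /\
  (* (3) alc *)
  (forall (x : V) (e : aexp V), indep x e ->
     rle (ert (Alloc x e)
            (bigsep e (fun i => pt (fun s => (s x + i - 1)%N) (fun _ => 0%N))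
               : runtime R V))
         emp) /\
  (* (4) aux *)
  (forall (C : prog V) (f g : runtime R V) (y : V),
     is_runtime f -> is_runtime g -> notin_prog y C ->
     rle (ert C f) g -> rle (ert C (inf_var y f)) (inf_var y g)).
Proof.
split; [exact: ert_mut_pt | split; [exact: ert_lookup_pt | split]].
- exact: ert_alloc_cells.
-
  by move=> C f g y _ _; apply: ert_inf_var_le.
Qed.
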